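(* Let $K\in\{\mathbb R,\mathbb C,\mathbb H\}$ and let $(E,d)$ be a metric vector space over $K$ such that $d$ is $C_0$-translation invariant and $(C_1,C_2,C_3)$-lipschitz multiplicative. Let $d_0(x,y)=\int_{\mathbb U}d(ux,uy)\,d\mu(u)$ and $\delta_0(x,y)=\lim_{n\to\infty}\frac1n d_0(nx,ny)$. Then every set that is closed (resp. open) for $\delta_0$ is closed (resp. open) for $d$; that is, the topology generated by $d$ is finer than the topology generated by $\delta_0$.
   Context: A metric vector space is a topological vector space over $K$ whose topology is generated by the metric $d$. $\mathbb U=\{u\in K:|u|=1\}$, $\mu$ the right-invariant Haar probability measure on $\mathbb U$. $d$ is $C_0$-translation invariant if $d(x+z,y+z)\le d(x,y)+C_0$ for all $x,y,z$. $(C_1,C_2,C_3)$-lipschitz multiplicative ($C_1\ge1$, $C_2,C_3\ge0$) means $C_1^{-1}|\lambda|d(x,y)-C_2|\lambda|-C_3\le d(\lambda x,\lambda y)\le C_1|\lambda|d(x,y)+C_2|\lambda|+C_3$ for all $\lambda\in K$, $x,y\in E$. (Under these hypotheses the limit defining $\delta_0$ exists.) *)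

From HB Require Import structures.
From mathcomp Require Import all_boot all_order all_algebra.
From mathcomp Require Import all_classical all_reals all_analysis.

Set Implicit Arguments.
Unset Strict Implicit.
Unset Printing Implicit Defensive.

Import Order.TTheory GRing.Theory Num.Theory.
Import numFieldNormedType.Exports.
Local Open Scope classical_set_scope.
Local Open Scope ring_scope.

Inductive Kkind := KR | KC | KH.

Record quat (R : Type) := Quat { q0 : R; q1 : R; q2 : R; q3 : R }.

Section Scalars.
Variable R : realType.

Definition Kcar (k : Kkind) : Type :=
  match k with KR => R | KC => (R * R)%type | KH => quat R end.

(* complex numbers a + b i as pairs (a, b) *)
Definition cadd (a b : R * R) : R * R := (a.1 + b.1, a.2 + b.2).
Definition csub (a b : R * R) : R * R := (a.1 - b.1, a.2 - b.2).
Definition cmul (a b : R * R) : R * R :=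
  (a.1 * b.1 - a.2 * b.2, a.1 * b.2 + a.2 * b.1).
Definition cabs (a : R * R) : R := Num.sqrt (a.1 ^+ 2 + a.2 ^+ 2).

(* quaternions a0 + a1 i + a2 j + a3 k, Hamilton product *)
Definition qadd (a b : quat R) : quat R :=
  Quat (q0 a + q0 b) (q1 a + q1 b) (q2 a + q2 b) (q3 a + q3 b).
Definition qsub (a b : quat R) : quat R :=
  Quat (q0 a - q0 b) (q1 a - q1 b) (q2 a - q2 b) (q3 a - q3 b).
Definition qmul (a b : quat R) : quat R :=
  Quat (q0 a * q0 b - q1 a * q1 b - q2 a * q2 b - q3 a * q3 b)
       (q0 a * q1 b + q1 a * q0 b + q2 a * q3 b - q3 a * q2 b)
       (q0 a * q2 b - q1 a * q3 b + q2 a * q0 b + q3 a * q1 b)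
       (q0 a * q3 b + q1 a * q2 b - q2 a * q1 b + q3 a * q0 b).
Definition qabs (a : quat R) : R :=
  Num.sqrt (q0 a ^+ 2 + q1 a ^+ 2 + q2 a ^+ 2 + q3 a ^+ 2).

Definition Kadd (k : Kkind) : Kcar k -> Kcar k -> Kcar k :=
  match k return Kcar k -> Kcar k -> Kcar k with
  | KR => fun a b : R => a + b | KC => cadd | KH => qadd end.
Definition Ksub (k : Kkind) : Kcar k -> Kcar k -> Kcar k :=
  match k return Kcar k -> Kcar k -> Kcar k with
  | KR => fun a b : R => a - b | KC => csub | KH => qsub end.
Definition Kmul (k : Kkind) : Kcar k -> Kcar k -> Kcar k :=
  match k return Kcar k -> Kcar k -> Kcar k with
  | KR => fun a b : R => a * b | KC => cmul | KH => qmul end.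
Definition Kone (k : Kkind) : Kcar k :=
  match k return Kcar k with
  | KR => (1 : R) | KC => ((1 : R), (0 : R)) | KH => Quat 1 0 0 0 end.
Definition Kabs (k : Kkind) : Kcar k -> R :=
  match k return Kcar k -> R with
  | KR => fun a : R => `|a| | KC => cabs | KH => qabs end.

(** Integral against the (right-invariant) Haar probability measure mu on
    U = {u in K : |u| = 1}, written through explicit parametrisations:
    - K = R : U = {1, -1}, mu uniform;
    - K = C : U = unit circle, u = exp(2 pi i t), t uniform on [0,1];
    - K = H : U = S^3, u = (sqrt r cos 2pi s, sqrt r sin 2pi s,
              sqrt(1-r) cos 2pi t, sqrt(1-r) sin 2pi t), (r,s,t) uniform on
              [0,1]^3 (Hopf coordinates with r = sin^2 eta); the image measure
              is the normalised surface measure on S^3. *)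
Definition lebR := (@lebesgue_measure R).
Definition I01 : set R := [set t | 0 <= t <= 1].

Definition Khaar (k : Kkind) : (Kcar k -> R) -> \bar R :=
  match k return (Kcar k -> R) -> \bar R with
  | KR => fun f => (((f 1 + f (-1)) / 2)%:E)%E
  | KC => fun f =>
      (\int[lebR]_(t in I01) (f (cos (2 * pi * t), sin (2 * pi * t)))%:E)%E
  | KH => fun f =>
      (\int[lebR]_(r in I01) \int[lebR]_(s in I01) \int[lebR]_(t in I01)
        (f (Quat (Num.sqrt r * cos (2 * pi * s)) (Num.sqrt r * sin (2 * pi * s))
                 (Num.sqrt (1 - r) * cos (2 * pi * t))
                 (Num.sqrt (1 - r) * sin (2 * pi * t))))%:E)%E
  end.

End Scalars.

Section MVS.
Variables (R : realType) (k : Kkind) (E : zmodType).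
Variables (sc : Kcar R k -> E -> E) (d : E -> E -> R).

Definition is_metric :=
  [/\ forall x y, 0 <= d x y,
      forall x y, d x y = 0 <-> x = y,
      forall x y, d x y = d y x &
      forall x y z, d x z <= d x y + d y z].

Definition is_left_Kmodule :=
  [/\ forall a b x, sc (Kadd a b) x = sc a x + sc b x,
      forall a x y, sc a (x + y) = sc a x + sc a y,
      forall a b x, sc (Kmul a b) x = sc a (sc b x) &
      forall x, sc (Kone R k) x = x].

Definition is_tvs_for_metric :=
  (forall x y e, 0 < e -> exists2 del, 0 < del &
     forall x' y', d x' x < del -> d y' y < del -> d (x' + y') (x + y) < e) /\
  (forall a x e, 0 < e -> exists2 del, 0 < del &
     forall a' x', Kabs (Ksub a' a) < del -> d x' x < del ->
       d (sc a' x') (sc a x) < e).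

Definition metric_vector_space := [/\ is_metric, is_left_Kmodule & is_tvs_for_metric].

Definition translation_invariant (C0 : R) :=
  forall x y z, d (x + z) (y + z) <= d x y + C0.

Definition lipschitz_multiplicative (C1 C2 C3 : R) :=
  [/\ 1 <= C1, 0 <= C2, 0 <= C3 &
   forall (l : Kcar R k) x y,
     C1^-1 * Kabs l * d x y - C2 * Kabs l - C3 <= d (sc l x) (sc l y) /\
     d (sc l x) (sc l y) <= C1 * Kabs l * d x y + C2 * Kabs l + C3].

Definition d0 (x y : E) : R := fine (Khaar (fun u => d (sc u x) (sc u y))).

Definition delta0 (x y : E) : R :=
  limn (fun n : nat => d0 (x *+ n) (y *+ n) / n%:R).

End MVS.

Definition mopen (T : Type) (R : realType) (m : T -> T -> R) (A : set T) :=
  forall x, A x -> exists2 e : R, 0 < e & forall y, m x y < e -> A y.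
Definition mclosed (T : Type) (R : realType) (m : T -> T -> R) (A : set T) :=
  mopen m (~` A).

From HB Require Import structures.
From mathcomp Require Import all_boot all_order all_algebra.
From mathcomp Require Import all_classical all_reals all_analysis.
From mathcomp Require Import measurable_realfun.
From mathcomp Require Import ring lra.
Import Order.TTheory GRing.Theory Num.Theory.
Import numFieldNormedType.Exports.
Local Open Scope classical_set_scope.
Local Open Scope ring_scope.

Set Implicit Arguments.
Unset Strict Implicit.
Unset Printing Implicit Defensive.

(** The averaged distance satisfies [0 <= d0 x y <= C1 d(x,y) + C2 + C3], and
    [n |-> d0 (n x) (n y)] is subadditive up to the constant [2 C0] coming from
    translation invariance.  Fekete's lemma therefore gives, for every [m >= 1],
    [delta0 x y <= (C1 d(m x, m y) + C2 + C3 + 2 C0) / m].  Inside a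
    [delta0]-ball of radius [e] around [x], choose [m] so large that the constant
    term is below [e/2]; continuity of [y |-> m y] for [d] then controls the
    first term.  Both properties of [d0] are pointwise inequalities integrated
    against the Haar measure, which is given as iterated integrals over [0,1] of
    functions that are continuous because [u |-> d(u x, u y)] is. *)

Local Notation int01 f := (Rintegral (@lebR _) (@I01 _) f).

Section IntegralOverUnitInterval.
Variable R : realType.
Implicit Types (f g h : R -> R) (c M : R).

Lemma I01_itv : @I01 R = `[0, 1]%classic.
Proof. by apply/seteqP; split => t /=; rewrite in_itv. Qed.

Lemma measurable_I01 : measurable (@I01 R).
Proof. by rewrite I01_itv; exact: measurable_itv. Qed.

Lemma lebR_I01 : @lebR R (@I01 R) = 1%E.
Proof. by rewrite I01_itv /lebR lebesgue_measure_itv /= lte01 oppr0 adde0. Qed.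

Lemma int01_cst c : int01 (fun=> c) = c.
Proof.
rewrite Rintegral_cst; last exact: measurable_I01.
by rewrite (_ : fine _ = 1) ?mulr1 //; exact: (congr1 fine lebR_I01).
Qed.

Lemma integrable01 f M : continuous f -> (forall t, `|f t| <= M) ->
  (@lebR R).-integrable (@I01 R) (EFin \o f).
Proof.
move=> f_cont f_bound; apply: measurable_bounded_integrable.
- exact: measurable_I01.
- by change (@lebR R (@I01 R) < +oo)%E; rewrite lebR_I01 ltry.
- exact: measurable_funS (continuous_measurable_fun f_cont).
- exists M; split; first by rewrite num_real.
  by move=> y My x _; apply: le_trans (f_bound x) _; rewrite ltW.
Qed.

Lemma integrable01_cst c : (@lebR R).-integrable (@I01 R) (EFin \o fun=> c).
Proof. by apply: (integrable01 (M := `|c|)) => // t; exact: cvg_cst. Qed.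

Section NonnegBoundedContinuous.
Variables (f : R -> R) (M : R).
Hypotheses (f_cont : continuous f) (f_bound : forall t, 0 <= f t <= M).

Lemma integrable01_nonneg : (@lebR R).-integrable (@I01 R) (EFin \o f).
Proof.
apply: (integrable01 (M := M)) => // t.
by case/andP: (f_bound t) => f0 fM; rewrite ger0_norm.
Qed.

Lemma int01_EFin : (\int[@lebR R]_(t in @I01 R) (f t)%:E)%E = (int01 f)%:E.
Proof.
rewrite /Rintegral fineK //.
by apply: integrable_fin_num; [exact: measurable_I01 | exact: integrable01_nonneg].
Qed.

Lemma int01_bound : 0 <= int01 f <= M.
Proof.
apply/andP; split; first by apply: Rintegral_ge0 => t _; case/andP: (f_bound t).
rewrite -[leRHS]int01_cst; apply: le_Rintegral.
- exact: measurable_I01.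
- exact: integrable01_nonneg.
- exact: integrable01_cst.
- by move=> t _; case/andP: (f_bound t).
Qed.

End NonnegBoundedContinuous.

Lemma int01_le_add f g h c (Mf Mg Mh : R) :
  continuous f -> (forall t, 0 <= f t <= Mf) ->
  continuous g -> (forall t, 0 <= g t <= Mg) ->
  continuous h -> (forall t, 0 <= h t <= Mh) ->
  (forall t, f t <= g t + h t + c) ->
  int01 f <= int01 g + int01 h + c.
Proof.
move=> cf fM cg gM ch hM fgh.
have mI := @measurable_I01; have ic := integrable01_cst c.
have ig := integrable01_nonneg cg gM; have ih := integrable01_nonneg ch hM.
have igh : (@lebR R).-integrable (@I01 R) (EFin \o fun t => g t + h t).
  exact: (integrableD _ ig ih).
rewrite -[c in leRHS]int01_cst -!RintegralD //.
apply: le_Rintegral => //; first exact: integrable01_nonneg cf fM.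
exact: (integrableD _ igh ic).
Qed.

Lemma continuous_int01 (h : R -> R -> R) M :
  (forall p t, 0 <= h p t <= M) ->
  (forall p, continuous (h p)) -> (forall t, continuous (h ^~ t)) ->
  continuous (fun p => int01 (h p)).
Proof.
move=> hM ch cht p.
apply: (@continuity_under_integral _ _ _ (@lebR R) h _ measurable_I01
  (p - 1) (p + 1) _ _ (fun=> M)).
- by move=> q _; exact: integrable01_nonneg (ch q) (hM q).
- by apply: aeW => t _ q _; exact: cht.
- exact: integrable01_cst.
- move=> q _; apply: aeW => t _.
  by case/andP: (hM q t) => h0 h1; rewrite ger0_norm.
- rewrite inE /= in_itv /=; apply/andP; split; lra.
Qed.

End IntegralOverUnitInterval.

Definition Kcont (R : realType) (k : Kkind) (f : Kcar R k -> R) :=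
  forall u0 e, 0 < e -> exists2 del, 0 < del &
    forall u, Kabs (Ksub u u0) < del -> `|f u - f u0| < e.

Section SphereCoordinates.
Variable R : realType.
Implicit Types (a b c g : R -> R) (r s t : R).

Lemma Kcont_comp k (f : Kcar R k -> R) (psi : R -> Kcar R k) :
  Kcont f -> (forall v0, Kabs (Ksub (psi v) (psi v0)) @[v --> v0] --> 0) ->
  continuous (fun v => f (psi v)).
Proof.
move=> cf cpsi v0; apply/cvgrPdist_lt => e e0.
have [del del0 fdel] := cf (psi v0) e e0.
have /cvgrPdist_lt/(_ del del0) := cpsi v0.
apply: filterS => v; rewrite sub0r normrN distrC => /(le_lt_trans (ler_norm _)); exact: fdel.
Qed.

Lemma cvg_sqr_sub0 g v0 : {for v0, continuous g} ->
  (g v - g v0) ^+ 2 @[v --> v0] --> 0.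
Proof.
move=> cg; have -> : 0 = (g v0 - g v0) ^+ 2 :> R by rewrite subrr expr0n.
rewrite expr2; under eq_fun do rewrite expr2.
by apply: cvgM; apply: cvgB => //; exact: cvg_cst.
Qed.

Lemma cvg_sqrt0 (F : R -> R) (v0 : R) : F v @[v --> v0] --> 0 ->
  Num.sqrt (F v) @[v --> v0] --> 0.
Proof. by rewrite -{2}sqrtr0; apply: continuous_cvg; exact: sqrt_continuous. Qed.

Lemma cabs_csub_cvg0 g1 g2 v0 :
  {for v0, continuous g1} -> {for v0, continuous g2} ->
  cabs (csub (g1 v, g2 v) (g1 v0, g2 v0)) @[v --> v0] --> 0.
Proof.
move=> c1 c2; apply: cvg_sqrt0; rewrite -[0]addr0.
by apply: cvgD; exact: cvg_sqr_sub0.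
Qed.

Lemma qabs_qsub_cvg0 g1 g2 g3 g4 v0 :
  {for v0, continuous g1} -> {for v0, continuous g2} ->
  {for v0, continuous g3} -> {for v0, continuous g4} ->
  qabs (qsub (Quat (g1 v) (g2 v) (g3 v) (g4 v))
             (Quat (g1 v0) (g2 v0) (g3 v0) (g4 v0))) @[v --> v0] --> 0.
Proof.
move=> c1 c2 c3 c4; apply: cvg_sqrt0.
have -> : 0 = 0 + 0 + 0 + 0 :> R by rewrite !addr0.
by apply: cvgD; [apply: cvgD; [apply: cvgD|]|]; exact: cvg_sqr_sub0.
Qed.

Definition circle t : R * R := (cos (2 * pi * t), sin (2 * pi * t)).

Definition hopf_quat r s t : quat R :=
  Quat (Num.sqrt r * cos (2 * pi * s)) (Num.sqrt r * sin (2 * pi * s))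
       (Num.sqrt (1 - r) * cos (2 * pi * t)) (Num.sqrt (1 - r) * sin (2 * pi * t)).

Definition clamp01 r : R := Num.max 0 (Num.min r 1).

Lemma cabs_circle t : cabs (circle t) = 1.
Proof. by rewrite /cabs /circle /= cos2Dsin2 sqrtr1. Qed.

Lemma qabs_hopf_quat r s t : 0 <= r <= 1 -> qabs (hopf_quat r s t) = 1.
Proof.
case/andP=> r0 r1; rewrite /qabs /= !exprMn !sqr_sqrtr ?subr_ge0 //.
by rewrite -addrA -!mulrDr !cos2Dsin2 !mulr1 addrC subrK sqrtr1.
Qed.

Lemma clamp01_ge0_le1 r : 0 <= clamp01 r <= 1.
Proof. by rewrite /clamp01 le_max lexx /= ge_max ler01 ge_min lexx orbT. Qed.

Lemma clamp01_id r : 0 <= r <= 1 -> clamp01 r = r.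
Proof. by case/andP=> r0 r1; rewrite /clamp01 (min_l r1) (max_r r0). Qed.

Lemma continuous_clamp01 : continuous clamp01.
Proof.
move=> r; apply: (@continuous_max _ _ (fun=> 0) (fun r => Num.min r 1)).
  exact: cvg_cst.
by apply: (@continuous_min _ _ id (fun=> 1)); [exact: cvg_id | exact: cvg_cst].
Qed.

Lemma continuous_cos2pi a : continuous a -> continuous (fun v => cos (2 * pi * a v)).
Proof.
move=> ca v; apply: continuous_comp; last exact: continuous_cos.
by apply: cvgMr; exact: ca.
Qed.

Lemma continuous_sin2pi a : continuous a -> continuous (fun v => sin (2 * pi * a v)).
Proof.
move=> ca v; apply: continuous_comp; last exact: continuous_sin.
by apply: cvgMr; exact: ca.
Qed.

Lemma continuous_Kcont_circle (f : R * R -> R) :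
  @Kcont R KC f -> continuous (fun t => f (circle t)).
Proof.
move=> cf; apply: (Kcont_comp (k := KC) cf) => v0.
apply: cabs_csub_cvg0;
  [apply: (continuous_cos2pi (a := id)) | apply: (continuous_sin2pi (a := id))];
  by move=> v; exact: cvg_id.
Qed.

Lemma continuous_Kcont_hopf (f : quat R -> R) a b c :
  @Kcont R KH f -> continuous a -> continuous b -> continuous c ->
  continuous (fun v => f (hopf_quat (clamp01 (a v)) (b v) (c v))).
Proof.
move=> cf ca cb cc.
have ca' : continuous (clamp01 \o a).
  by move=> v; apply: continuous_comp; [exact: ca | exact: continuous_clamp01].
have cs : continuous (fun v => Num.sqrt (clamp01 (a v))).
  by move=> v; apply: continuous_comp; [exact: ca' | exact: sqrt_continuous].
have cs' : continuous (fun v => Num.sqrt (1 - clamp01 (a v))).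
  move=> v; apply: continuous_comp; last exact: sqrt_continuous.
  by apply: cvgB; [exact: cvg_cst | exact: ca'].
apply: (Kcont_comp (k := KH) (psi := fun v => hopf_quat (clamp01 (a v)) (b v) (c v)) cf).
move=> v0; rewrite /hopf_quat.
apply: qabs_qsub_cvg0; apply: cvgM;
  by [exact: cs | exact: cs' | exact: continuous_cos2pi | exact: continuous_sin2pi].
Qed.

End SphereCoordinates.

Section HopfIntegrals.
Variables (R : realType) (f : quat R -> R) (M : R).
Hypotheses (f_cont : @Kcont R KH f) (f_bound : forall u, qabs u = 1 -> 0 <= f u <= M).

(* Clamping keeps [hopf_quat] on the sphere for every real [r], so the partial
   integrals below are bounded and continuous on all of [R], as
   [continuous_int01] requires; on [[0,1]] it changes nothing ([clamp01_id]). *)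
Definition hopf r s t := f (hopf_quat (clamp01 r) s t).
Definition hopf_t r s := int01 (hopf r s).
Definition hopf_st r := int01 (hopf_t r).

Let cst_cont (x : R) : continuous (fun _ : R => x). Proof. by move=> ?; exact: cvg_cst. Qed.
Let id_cont : continuous (@id R). Proof. by move=> ?; exact: cvg_id. Qed.

Lemma hopf_bound r s t : 0 <= hopf r s t <= M.
Proof. by apply: f_bound; apply: qabs_hopf_quat; exact: clamp01_ge0_le1. Qed.

Lemma continuous_hopf_in_t r s : continuous (hopf r s).
Proof. exact: (continuous_Kcont_hopf f_cont (@cst_cont r) (@cst_cont s) id_cont). Qed.

Lemma hopf_t_bound r s : 0 <= hopf_t r s <= M.
Proof. by apply: int01_bound; [exact: continuous_hopf_in_t | exact: hopf_bound]. Qed.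

Lemma continuous_hopf_t (a b : R -> R) : continuous a -> continuous b ->
  continuous (fun v => hopf_t (a v) (b v)).
Proof.
move=> ca cb; apply: (continuous_int01 (M := M)) => [p t|p|t].
- exact: hopf_bound.
- exact: continuous_hopf_in_t.
- exact: (continuous_Kcont_hopf f_cont ca cb (@cst_cont t)).
Qed.

Lemma continuous_hopf_t_in_s r : continuous (hopf_t r).
Proof. exact: (continuous_hopf_t (@cst_cont r) id_cont). Qed.

Lemma hopf_st_bound r : 0 <= hopf_st r <= M.
Proof. by apply: int01_bound; [exact: continuous_hopf_t_in_s | exact: hopf_t_bound]. Qed.

Lemma continuous_hopf_st : continuous hopf_st.
Proof.
apply: (continuous_int01 (M := M)) => [p s|p|s].
- exact: hopf_t_bound.
- exact: continuous_hopf_t_in_s.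
- exact: (continuous_hopf_t id_cont (@cst_cont s)).
Qed.

Lemma Khaar_KH : fine (@Khaar R KH f) = int01 hopf_st.
Proof.
rewrite /Khaar /Rintegral; congr fine.
apply: eq_integral => r; rewrite inE => r01.
rewrite /hopf_st -(int01_EFin (continuous_hopf_t_in_s (r := r)) (hopf_t_bound r)).
apply: eq_integral => s _.
rewrite /hopf_t -(int01_EFin (continuous_hopf_in_t (r := r) (s := s)) (hopf_bound r s)).
by apply: eq_integral => t _; rewrite /hopf clamp01_id.
Qed.

End HopfIntegrals.

Lemma Khaar_KR (R : realType) (f : R -> R) :
  fine (@Khaar R KR f) = (f 1 + f (-1)) / 2.
Proof. by []. Qed.

Lemma Khaar_KC (R : realType) (f : R * R -> R) :
  fine (@Khaar R KC f) = int01 (fun t => f (circle t)).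
Proof. by []. Qed.

Lemma int01_hopf_st_le_add (R : realType) (f g h : quat R -> R) (c Mf Mg Mh : R) :
  @Kcont R KH f -> (forall u, qabs u = 1 -> 0 <= f u <= Mf) ->
  @Kcont R KH g -> (forall u, qabs u = 1 -> 0 <= g u <= Mg) ->
  @Kcont R KH h -> (forall u, qabs u = 1 -> 0 <= h u <= Mh) ->
  (forall u, qabs u = 1 -> f u <= g u + h u + c) ->
  int01 (hopf_st f) <= int01 (hopf_st g) + int01 (hopf_st h) + c.
Proof.
move=> cf fM cg gM ch hM fgh.
apply: (int01_le_add (continuous_hopf_st cf fM) (hopf_st_bound cf fM)
  (continuous_hopf_st cg gM) (hopf_st_bound cg gM)
  (continuous_hopf_st ch hM) (hopf_st_bound ch hM)) => r.
apply: (int01_le_add (continuous_hopf_t_in_s cf fM (r := r)) (hopf_t_bound cf fM r)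
  (continuous_hopf_t_in_s cg gM (r := r)) (hopf_t_bound cg gM r)
  (continuous_hopf_t_in_s ch hM (r := r)) (hopf_t_bound ch hM r)) => s.
apply: (int01_le_add (continuous_hopf_in_t cf (r := r) (s := s)) (hopf_bound fM r s)
  (continuous_hopf_in_t cg (r := r) (s := s)) (hopf_bound gM r s)
  (continuous_hopf_in_t ch (r := r) (s := s)) (hopf_bound hM r s)) => t.
by apply: fgh; apply: qabs_hopf_quat; exact: clamp01_ge0_le1.
Qed.

Lemma Khaar_bound (R : realType) (k : Kkind) (f : Kcar R k -> R) (M : R) :
  Kcont f -> (forall u, Kabs u = 1 -> 0 <= f u <= M) ->
  0 <= fine (Khaar f) <= M.
Proof.
case: k f => f cf fM.
- rewrite Khaar_KR; move: (fM 1 (normr1 _)) (fM (-1) (normrN1 _)).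
  by move=> /andP[? ?] /andP[? ?]; apply/andP; split; lra.
- rewrite Khaar_KC; apply: int01_bound (continuous_Kcont_circle cf) _ => t.
  by apply: fM; exact: cabs_circle.
- rewrite (Khaar_KH cf fM).
  exact: int01_bound (continuous_hopf_st cf fM) (hopf_st_bound cf fM).
Qed.

Lemma Khaar_le_add (R : realType) (k : Kkind) (f g h : Kcar R k -> R) (c Mf Mg Mh : R) :
  Kcont f -> (forall u, Kabs u = 1 -> 0 <= f u <= Mf) ->
  Kcont g -> (forall u, Kabs u = 1 -> 0 <= g u <= Mg) ->
  Kcont h -> (forall u, Kabs u = 1 -> 0 <= h u <= Mh) ->
  (forall u, Kabs u = 1 -> f u <= g u + h u + c) ->
  fine (Khaar f) <= fine (Khaar g) + fine (Khaar h) + c.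
Proof.
case: k f g h => f g h cf fM cg gM ch hM fgh.
- by rewrite !Khaar_KR; move: (fgh 1 (normr1 _)) (fgh (-1) (normrN1 _)); lra.
- rewrite !Khaar_KC.
  have onC (t : R) : @Kabs R KC (circle t) = 1 := cabs_circle t.
  apply: (int01_le_add (continuous_Kcont_circle cf) (fun t => fM _ (onC t))
    (continuous_Kcont_circle cg) (fun t => gM _ (onC t))
    (continuous_Kcont_circle ch) (fun t => hM _ (onC t))).
  by move=> t; exact: fgh.
- (* rewriting with [Khaar_KH] in a goal that also mentions [Khaar g] makes the
     unifier unfold the Haar integrals, hence this detour *)
  apply: (@le_trans _ _ (int01 (hopf_st g) + int01 (hopf_st h) + c)); last first.
    apply: lerD => //; apply: lerD.
      by move: (Khaar_KH cg gM) => ->.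
    by move: (Khaar_KH ch hM) => ->.
  rewrite (Khaar_KH cf fM).
  exact: (int01_hopf_st_le_add cf fM cg gM ch hM fgh).
Qed.

Section Fekete.
Variable R : realType.

Lemma subadditive_le_mulnD (b : nat -> R) q m r :
  (forall n n', b (n + n')%N <= b n + b n') -> b (q * m + r)%N <= q%:R * b m + b r.
Proof.
move=> b_sub; elim: q => [|q IH]; first by rewrite mul0n add0n mul0r add0r.
rewrite mulSn -addnA (le_trans (b_sub _ _)) // -natr1 mulrDl mul1r.
by move: IH; lra.
Qed.

Lemma fekete (a : nat -> R) (c : R) :
  0 <= c -> (forall n, 0 <= a n) ->
  (forall n n', a (n + n')%N <= a n + a n' + c) ->
  exists2 L, a n / n%:R @[n --> \oo] --> L &
    forall m, (0 < m)%N -> L <= (a m + c) / m%:R.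
Proof.
move=> c_ge0 a_ge0 a_sub; pose b n := a n + c.
have b_sub n n' : b (n + n')%N <= b n + b n' by rewrite /b; have := a_sub n n'; lra.
pose S := [set x | exists2 m, (0 < m)%N & x = b m / m%:R].
have S_lb : has_lbound S.
  by exists 0 => _ [m _ ->]; rewrite divr_ge0 ?addr_ge0.
have S_n0 : S !=set0 by exists (b 1%N / 1%:R); exists 1%N.
have inf_le := ge_inf S_lb.
exists (inf S); last by move=> m m_gt0; apply: inf_le; exists m.
apply/cvgrPdist_lt => e e_gt0.
have e2_gt0 : 0 < e / 2 by rewrite divr_gt0.
have [_ [m m_gt0 ->] bm_lt] := inf_adherent e2_gt0 (conj S_n0 S_lb).
pose B := \sum_(i < m) b i.
have bB r : (r < m)%N -> b r <= B.
  move=> rm; rewrite /B (bigD1 (Ordinal rm)) //= lerDl.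
  by apply: sumr_ge0 => i _; rewrite addr_ge0.
have cB : c <= B by apply: le_trans (bB 0%N m_gt0); rewrite lerDr.
exists (Num.trunc (2 * B / e)).+1 => // n /= Nn.
have n_gt0 : (0 < n)%N by apply: leq_trans Nn.
have nR_gt0 : 0 < n%:R :> R by rewrite ltr0n.
have mR_gt0 : 0 < m%:R :> R by rewrite ltr0n.
have Bn_lt : B / n%:R < e / 2.
  have : 2 * B / e < n%:R by apply: lt_le_trans (truncnS_gt _) _; rewrite ler_nat.
  by rewrite !ltr_pdivrMr //; lra.
have cBn : c / n%:R <= B / n%:R by rewrite ler_pM2r ?invr_gt0.
have infS_le : inf S <= a n / n%:R + c / n%:R.
  by rewrite -mulrDl; apply: inf_le; exists n.
have bn_le : a n / n%:R <= (n %/ m)%:R * b m / n%:R + B / n%:R.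
  rewrite -mulrDl ler_pM2r ?invr_gt0 //.
  have := subadditive_le_mulnD (n %/ m) m (n %% m) b_sub; rewrite -divn_eq.
  by have := bB _ (ltn_pmod n m_gt0); rewrite /b; lra.
have qbm_le : (n %/ m)%:R * b m / n%:R <= b m / m%:R.
  rewrite ler_pdivrMr // mulrAC -mulrA [X in _ <= X]mulrC.
  apply: ler_wpM2r; first by rewrite addr_ge0.
  by rewrite ler_pdivlMr // -natrM ler_nat leq_trunc_div.
rewrite ltr_norml; apply/andP; split; lra.
Qed.

End Fekete.

Section MetricVectorSpace.
Variables (R : realType) (k : Kkind) (E : zmodType).
Variables (sc : Kcar R k -> E -> E) (d : E -> E -> R) (C0 C1 C2 C3 : R).
Hypotheses (mvs : metric_vector_space sc d) (tinv : translation_invariant d C0)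
  (lip : lipschitz_multiplicative sc d C1 C2 C3).

Let d_ge0 x y : 0 <= d x y. Proof. by case: mvs => -[]. Qed.
Let d_sym x y : d x y = d y x. Proof. by case: mvs => -[]. Qed.
Let d_triangle x y z : d x z <= d x y + d y z. Proof. by case: mvs => -[]. Qed.
Let d_xx x : d x x = 0. Proof. by case: mvs => -[_ /(_ x x) [_ ->]]. Qed.

Lemma translation_constant_ge0 : 0 <= C0.
Proof. by have := tinv 0 0 0; rewrite addr0 d_xx; lra. Qed.

Lemma d_addD x x' y y' : d (x + x') (y + y') <= d x y + d x' y' + 2 * C0.
Proof.
have := d_triangle (x + x') (y + x') (y + y').
have := tinv x y x'; have := tinv x' y' y.
by rewrite [x' + y]addrC [y' + y]addrC; lra.
Qed.

Lemma continuous_mulrn x m e : 0 < e -> exists2 del, 0 < del &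
  forall y, d y x < del -> d (y *+ m) (x *+ m) < e.
Proof.
have [cadd _] : is_tvs_for_metric sc d by case: mvs.
elim: m e => [|m IH] e e_gt0; first by exists 1 => // y _; rewrite !mulr0n d_xx.
have [del1 del1_gt0 H1] := cadd x (x *+ m) e e_gt0.
have [del2 del2_gt0 H2] := IH del1 del1_gt0.
exists (Num.min del1 del2); first by rewrite lt_min del1_gt0.
by move=> y; rewrite lt_min => /andP[y1 y2]; rewrite !mulrS; apply: H1 => //; apply: H2.
Qed.

Lemma Kcont_d_sc x y : Kcont (fun u => d (sc u x) (sc u y)).
Proof.
have [_ cscal] : is_tvs_for_metric sc d by case: mvs.
move=> u0 e e_gt0; have e2_gt0 : 0 < e / 2 by rewrite divr_gt0.
have [del1 del1_gt0 H1] := cscal u0 x (e / 2) e2_gt0.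
have [del2 del2_gt0 H2] := cscal u0 y (e / 2) e2_gt0.
exists (Num.min del1 del2); first by rewrite lt_min del1_gt0.
move=> u; rewrite lt_min => /andP[u1 u2].
have := H1 u x u1; rewrite d_xx => /(_ del1_gt0) ux.
have := H2 u y u2; rewrite d_xx => /(_ del2_gt0) uy.
have := d_triangle (sc u x) (sc u0 x) (sc u y).
have := d_triangle (sc u0 x) (sc u0 y) (sc u y).
have := d_triangle (sc u0 x) (sc u x) (sc u0 y).
have := d_triangle (sc u x) (sc u y) (sc u0 y).
rewrite (d_sym (sc u0 y) (sc u y)) (d_sym (sc u0 x) (sc u x)).
by rewrite ltr_norml; lra.
Qed.

Let d_sc_bound x y u : Kabs u = 1 -> 0 <= d (sc u x) (sc u y) <= C1 * d x y + C2 + C3.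
Proof.
case: lip => _ _ _ /(_ u x y) [_ le_d] u1.
by rewrite d_ge0 /=; move: le_d; rewrite u1 !mulr1.
Qed.

Lemma d0_bound x y : 0 <= d0 sc d x y <= C1 * d x y + C2 + C3.
Proof. exact: Khaar_bound (Kcont_d_sc x y) (d_sc_bound x y). Qed.

Lemma d0_mulrnD_le x y n n' :
  d0 sc d (x *+ (n + n')) (y *+ (n + n')) <=
  d0 sc d (x *+ n) (y *+ n) + d0 sc d (x *+ n') (y *+ n') + 2 * C0.
Proof.
have [_ [_ scDr _ _] _] := mvs.
apply: (Khaar_le_add (Kcont_d_sc _ _) (d_sc_bound _ _) (Kcont_d_sc _ _) (d_sc_bound _ _)
  (Kcont_d_sc _ _) (d_sc_bound _ _)) => u _.
by rewrite !mulrnDr !scDr; exact: d_addD.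
Qed.

Lemma delta0_le x y m : (0 < m)%N ->
  delta0 sc d x y <= (C1 * d (x *+ m) (y *+ m) + (C2 + C3 + 2 * C0)) / m%:R.
Proof.
move=> m_gt0; pose a n := d0 sc d (x *+ n) (y *+ n).
have a_ge0 n : 0 <= a n by case/andP: (d0_bound (x *+ n) (y *+ n)).
have c_ge0 : 0 <= 2 * C0 by rewrite mulr_ge0 ?translation_constant_ge0.
have [L aL L_le] := fekete c_ge0 a_ge0 (d0_mulrnD_le x y).
rewrite /delta0 (cvg_lim _ aL) //; apply: le_trans (L_le m m_gt0) _.
rewrite ler_pM2r ?invr_gt0 ?ltr0n //.
by case/andP: (d0_bound (x *+ m) (y *+ m)) => _; rewrite /a; lra.
Qed.

Lemma mopen_delta0 A : mopen (delta0 sc d) A -> mopen d A.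
Proof.
move=> A_open x Ax; have [e e_gt0 ball_sub] := A_open x Ax.
have [C1_ge1 C2_ge0 C3_ge0 _] := lip.
pose K := C2 + C3 + 2 * C0.
have K_ge0 : 0 <= K by have := translation_constant_ge0; rewrite /K; lra.
pose m := (Num.trunc (2 * K / e)).+1.
have mR_gt0 : 0 < m%:R :> R by rewrite ltr0n.
have Km_lt : K / m%:R < e / 2.
  have : 2 * K / e < m%:R := truncnS_gt _.
  by rewrite !ltr_pdivrMr //; lra.
have C1_gt0 : 0 < C1 by apply: lt_le_trans C1_ge1.
have e'_gt0 : 0 < e / (2 * C1) by rewrite divr_gt0 // mulr_gt0.
have [del del_gt0 mx_near] := continuous_mulrn x m e'_gt0.
exists del => // y dxy; apply: ball_sub.
apply: le_lt_trans (delta0_le (m := m) x y (ltn0Sn _)) _.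
have : C1 * d (x *+ m) (y *+ m) < e / 2.
  have -> : e / 2 = C1 * (e / (2 * C1)) by field; rewrite gt_eqF.
  by rewrite ltr_pM2l // d_sym; apply: mx_near; rewrite d_sym.
have : C1 * d (x *+ m) (y *+ m) / m%:R <= C1 * d (x *+ m) (y *+ m).
  by rewrite ler_pdivrMr // ler_peMr ?mulr_ge0 ?d_ge0 ?ler1n ?ltW.
by move: Km_lt; rewrite /K mulrDl; lra.
Qed.

End MetricVectorSpace.

Theorem lemma5 (R : realType) (k : Kkind) (E : zmodType)
  (sc : Kcar R k -> E -> E) (d : E -> E -> R) (C0 C1 C2 C3 : R) :
  metric_vector_space sc d ->
  translation_invariant d C0 ->
  lipschitz_multiplicative sc d C1 C2 C3 ->
  forall A : set E,
    (mclosed (delta0 sc d) A -> mclosed d A) /\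
    (mopen (delta0 sc d) A -> mopen d A).
Proof. by move=> mvs tinv lip A; split; apply: mopen_delta0 mvs tinv lip _. Qed.
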